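(* Let $S\in U_q(\mathfrak h)^{\otimes2}$ be invertible, with $s:=\log_qS=\sum_{\mu,\nu}s_{\mu\nu}\zeta^{\alpha_\mu}\otimes\zeta^{\alpha_\nu}\in\mathfrak h\otimes\mathfrak h$. Put $m(s)=\sum s_{\mu\nu}\zeta^{\alpha_\mu}\zeta^{\alpha_\nu}$, and for each index $\mu$ let $$Y_\mu=-\zeta^{\alpha_\mu}+(\mathrm{id}\otimes\ell_\mu)(s)-(\ell_\mu\otimes\mathrm{id})(s)\in\mathfrak h,$$ where $\ell_\mu$ is the linear form $h\mapsto(\zeta^{\alpha_\mu},h)$. Define $$M^{(0)}(x)=q^{-\frac14m(\Omega_{\mathfrak h})-\frac12m(s)}\prod_\mu x_\mu^{\frac12Y_\mu}\in\mathbb A(\mathfrak h)\otimes U_q(\mathfrak h),$$ so that $M^{(0)}(x)^2=k^{-1}\,m(S^{-1})\prod_\mu x_\mu^{Y_\mu}$, where $k=q^{\frac12m(\Omega_{\mathfrak h})}$ and $m(S^{-1})=q^{-m(s)}$. Then $M^{(0)}(x)$ is invertible and satisfies $$\Delta(M^{(0)}(x))=S_{12}^{-1}\,M^{(0)}_1(xq^{h_2})\,M^{(0)}_2(x),\qquad M^{(0)}_1(xq^{h_2})^2=M^{(0)}_1(x)^2\,S_{12}\,S_{21}^{-1}\,K^{-1}.$$ If moreover $K\,S_{12}\,S_{21}=1\otimes1$, then $M^{(0)}(x)^2=\prod_\mu x_\mu^{Y_\mu}$.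
   Context: Setting. - $\mathfrak g$ is a simply-laced finite or non-twisted affine Kac–Moody algebra with Cartan subalgebra $\mathfrak h$, simple coroots $h_{\alpha_\mu}$, and invariant form $(\cdot,\cdot)$. - The index $\mu$ runs over the simple roots, and additionally over the symbol $d$ in the affine case, with $h_{\alpha_d}:=d$ and $\zeta^{\alpha_d}:=\zeta^d=c$. Thus $\{\zeta^{\alpha_\mu}\}$ is the basis of $\mathfrak h$ dual to $\{h_{\alpha_\mu}\}$ for $(\cdot,\cdot)$. - $\Omega_{\mathfrak h}=\sum_\mu\zeta^{\alpha_\mu}\otimes h_{\alpha_\mu}$, $K=q^{\Omega_{\mathfrak h}}$, and $m$ denotes multiplication $\mathfrak h\otimes\mathfrak h\to S(\mathfrak h)$. - $U_q(\mathfrak h)$ is the commutative algebra generated by the $q^{hh'}$ ($h,h'\in\mathfrak h\oplus\mathbb C$), with $\Delta(q^h)=q^h\otimes q^h$. Hence $\Delta(q^{hh'})=q^{hh'}\otimes q^{hh'}\,q^{h\otimes h'+h'\otimes h}$, with the tensor square extended by the elements $q^{h\otimes h'}$. - $\mathbb A(\mathfrak h)$ is the commutative Hopf algebra generated by symbols $x_\mu^h$ ($h\in\mathfrak h+\mathbb C1$) with $x_\mu^{h+h'}=x_\mu^hx_\mu^{h'}$ and $\Delta(x_\mu^h)=x_\mu^h\otimes x_\mu^h$; $\Delta$ acts on $\mathbb A(\mathfrak h)\otimes U_q(\mathfrak h)$ through the $U_q(\mathfrak h)$ factor. - The shifted argument $xq^{h_2}$ means: each factor $x_\mu^{Y}$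 with $Y$ in tensor factor 1 is replaced by $x_\mu^Y\,q^{Y\otimes h_{\alpha_\mu}}$, where $h_{\alpha_\mu}$ sits in tensor factor 2. *)

From HB Require Import structures.
From mathcomp Require Import all_boot all_order all_algebra.
Set Implicit Arguments. Unset Strict Implicit. Unset Printing Implicit Defensive.
Import Order.TTheory GRing.Theory Num.Theory.
Local Open Scope ring_scope.

Definition simply_laced_cartan (l : nat) (A : 'M[int]_l) : Prop :=
  A^T = A /\ (forall i, A i i = 2%:Z) /\
  (forall i j, i != j -> A i j = 0 \/ A i j = - 1).

Definition indecomposable (l : nat) (A : 'M[int]_l) : Prop :=
  forall S : {set 'I_l}, S != set0 -> S != setT ->
    exists i j, [/\ i \in S, j \notin S & A i j != 0].

Definition qform (l : nat) (A : 'M[int]_l) (v : 'rV[rat]_l) : rat :=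
  (v *m map_mx (fun z : int => z%:~R) A *m v^T) 0 0.

Definition finite_type (l : nat) (A : 'M[int]_l) : Prop :=
  simply_laced_cartan A /\ indecomposable A /\
  (forall v : 'rV[rat]_l, v != 0 -> 0 < qform A v).

Definition affine_type (l : nat) (A : 'M[int]_l) : Prop :=
  simply_laced_cartan A /\ indecomposable A /\
  (forall v : 'rV[rat]_l, 0 <= qform A v) /\
  \rank (map_mx (fun z : int => (z%:~R : rat)) A) = l.-1.

(* G : 'M[F]_n is the Gram matrix ((h_{alpha_mu}, h_{alpha_nu}))_{mu,nu}
   of the invariant form, the index mu running over the simple roots
   (and over the extra symbol d, placed last, in the affine case). *)
Definition finite_gram (F : numClosedFieldType) (n : nat) (G : 'M[F]_n) : Prop :=
  exists A : 'M[int]_n, finite_type A /\ G = map_mx (fun z : int => z%:~R) A.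

(* affine realization: (h_i,h_j) = a_ij, (h_i,d) = delta_{i,0}, (d,d) = 0,
   where alpha_0 is a node whose mark in c = sum_i a_i h_i is a_0 = 1 *)
Definition affine_gram (F : numClosedFieldType) (n : nat) (G : 'M[F]_n) : Prop :=
  exists (l : nat) (A : 'M[int]_l) (i0 : 'I_l) (e : (l + 1)%N = n),
    affine_type A /\
    (exists a : 'rV[int]_l, a *m A = 0 /\ (forall i, 0 < a 0 i) /\ a 0 i0 = 1) /\
    G = castmx (e, e)
          (block_mx (map_mx (fun z : int => z%:~R) A)
                    (delta_mx i0 0 : 'M[F]_(l, 1))
                    (delta_mx 0 i0 : 'M[F]_(1, l))
                    (0 : 'M[F]_1)).

Definition simply_laced_KM_gram (F : numClosedFieldType) (n : nat) (G : 'M[F]_n) : Prop :=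
  finite_gram G \/ affine_gram G.

(*    h      = 'rV[F]_n  (v <-> sum_a v_a h_a)                          *)
(*    h (x) h = 'M[F]_n  (T <-> sum_{a,b} T_ab h_a (x) h_b)             *)
(*    S^2(h) = symmetric matrices (Q <-> sum_{a,b} Q_ab h_a h_b)        *)
Section LinAlg.
Variables (F : numClosedFieldType) (n : nat).

Definition hb (mu : 'I_n) : 'rV[F]_n := delta_mx 0 mu.
Definition form (G : 'M[F]_n) (u v : 'rV[F]_n) : F := (u *m G *m v^T) 0 0.
(* dual basis zeta^{alpha_mu}: (zeta^mu, h_nu) = delta_{mu nu} *)
Definition zeta (G : 'M[F]_n) (mu : 'I_n) : 'rV[F]_n := row mu (invmx G).
Definition tens (u v : 'rV[F]_n) : 'M[F]_n := u^T *m v.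
Definition Omega (G : 'M[F]_n) : 'M[F]_n := \sum_mu tens (zeta G mu) (hb mu).
Definition ell (G : 'M[F]_n) (mu : 'I_n) (v : 'rV[F]_n) : F := form G (zeta G mu) v.
Definition id_ot (f : 'rV[F]_n -> F) (T : 'M[F]_n) : 'rV[F]_n :=
  \sum_a \sum_b (T a b * f (hb b)) *: hb a.
Definition ot_id (f : 'rV[F]_n -> F) (T : 'M[F]_n) : 'rV[F]_n :=
  \sum_a \sum_b (T a b * f (hb a)) *: hb b.
(* multiplication m : h (x) h -> S^2(h) *)
Definition msym (T : 'M[F]_n) : 'M[F]_n := 2^-1 *: (T + T^T).

(* An element  q^Q prod_mu x_mu^{X_mu}  of A(h) (x) U_q(h) is recorded   *)
(* by its exponents: X (row mu = exponent of x_mu, in h) and Q in S^2(h).*)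
Record mono1 := Mono1 { x1 : 'M[F]_n ; q1 : 'M[F]_n }.
Definition mul1 (M N : mono1) := Mono1 (x1 M + x1 N) (q1 M + q1 N).
Definition one1 := Mono1 0 0.
Definition inv1 (M : mono1) := Mono1 (- x1 M) (- q1 M).
Definition sq1 (M : mono1) := mul1 M M.
Definition qexp1 (Q : 'M[F]_n) := Mono1 0 Q.
Definition xprod (Y : 'I_n -> 'rV[F]_n) := Mono1 (\matrix_(mu, a) Y mu 0 a) 0.

(* Elements of A(h) (x) U_q(h)^{(x)2} (tensor square extended by the
   q^{h (x) h'}):  prod_mu x_mu^{Xa_mu (x) 1} x_mu^{1 (x) Xb_mu}
   (q^{Qa} (x) q^{Qb}) q^{C},  Qa,Qb in S^2(h), C in h (x) h. *)
Record mono2 := Mono2 { xa : 'M[F]_n ; xb : 'M[F]_n ;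
                        qa : 'M[F]_n ; qb : 'M[F]_n ; qc : 'M[F]_n }.
Definition mul2 (M N : mono2) :=
  Mono2 (xa M + xa N) (xb M + xb N) (qa M + qa N) (qb M + qb N) (qc M + qc N).
Definition one2 := Mono2 0 0 0 0 0.
Definition inv2 (M : mono2) := Mono2 (- xa M) (- xb M) (- qa M) (- qb M) (- qc M).
Definition sq2 (M : mono2) := mul2 M M.
Definition qexp2 (T : 'M[F]_n) := Mono2 0 0 0 0 T.
(* coproduct: Delta(x^h) = x^h (x) x^h, Delta(q^{Q}) = (q^Q (x) q^Q) q^{Q + Q^T}
   (for Q = hh': q^{hh'} (x) q^{hh'} q^{h (x) h' + h' (x) h}) *)
Definition Delta (M : mono1) := Mono2 (x1 M) (x1 M) (q1 M) (q1 M) (q1 M + (q1 M)^T).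
Definition emb1 (M : mono1) := Mono2 (x1 M) 0 (q1 M) 0 0.
Definition emb2 (M : mono1) := Mono2 0 (x1 M) 0 (q1 M) 0.
(* substitution x -> x q^{h_2}: x_mu^{Y (x) 1} -> x_mu^{Y (x) 1} q^{Y (x) h_mu} *)
Definition shift (M : mono2) :=
  Mono2 (xa M) (xb M) (qa M) (qb M)
        (qc M + \sum_mu tens (row mu (xa M)) (hb mu)).

Definition Yvec (G s : 'M[F]_n) (mu : 'I_n) : 'rV[F]_n :=
  - zeta G mu + id_ot (ell G mu) s - ot_id (ell G mu) s.

Definition M0 (G s : 'M[F]_n) : mono1 :=
  mul1 (qexp1 (- (4%:R^-1 *: msym (Omega G)) - 2%:R^-1 *: msym s))
       (xprod (fun mu => 2%:R^-1 *: Yvec G s mu)).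

Definition kk (G : 'M[F]_n) : mono1 := qexp1 (2%:R^-1 *: msym (Omega G)).

End LinAlg.

(* The statement is an identity between "formal exponentials": an element
   q^Q prod_mu x_mu^{X_mu} is recorded by its exponents, products add
   exponents, and the coproduct and the shift x -> x q^{h_2} act linearly
   on them.  So the theorem reduces to linear algebra on h (x) h.

   Writing W := G^{-1} for the inverse Gram matrix (the coordinates of
   Omega_h = sum_mu zeta^mu (x) h_mu) and s for log_q S, one finds
     M0 = q^Q prod_mu x_mu^{X_mu},  X = 1/2 (-W + s^T - s),
                                    Q = -1/4 (W + s + s^T),
   where W + s + s^T is the exponent of K S12 S21.  Every claim is then an
   entrywise linear identity in W, s, valid as soon as W is symmetric. *)
From Pilot Require Import Defs.
From HB Require Import structures.
From mathcomp Require Import all_boot all_order all_algebra.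
From mathcomp Require Import ring.
Import Order.TTheory GRing.Theory Num.Theory.
Local Open Scope ring_scope.

Lemma unitmx_trivial_kernel {K : fieldType} {n : nat} (A : 'M[K]_n) :
  (forall u : 'rV_n, u *m A = 0 -> u = 0) -> A \in unitmx.
Proof.
move=> ker0; rewrite -row_free_unit -kermx_eq0; apply/eqP/row_matrixP => i.
by rewrite row0; apply: ker0; rewrite -row_mul mulmx_ker row0.
Qed.

Lemma unitmx_intr {F : numFieldType} {n : nat} (A : 'M[int]_n) :
  (map_mx (intr : int -> F) A \in unitmx) = (\det A != 0).
Proof. by rewrite unitmxE unitfE (det_map_mx (intr : int -> F)) intr_eq0. Qed.

(* Finite type: the symmetrized Cartan matrix is positive definite, so it
   has trivial kernel over Q, hence is invertible over every F. *)
Lemma finite_type_unitmx {F : numFieldType} {n : nat} (A : 'M[int]_n) :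
  finite_type A -> map_mx (intr : int -> F) A \in unitmx.
Proof.
move=> [_ [_ posdef]]; rewrite unitmx_intr -(unitmx_intr (F := rat)).
apply: unitmx_trivial_kernel => u uA0; apply/eqP/negPn/negP => /posdef.
by rewrite /qform uA0 mul0mx mxE ltxx.
Qed.

Lemma corank1_kernel {K : fieldType} {l : nat} {A : 'M[K]_l} {a v : 'rV[K]_l} :
  \rank A = l.-1 -> a *m A = 0 -> a != 0 -> v *m A = 0 ->
  exists c, v = c *: a.
Proof.
move=> rkA aA0 a_neq0 vA0.
have aker : (a <= kermx A)%MS by apply/sub_kermxP.
have vker : (v <= kermx A)%MS by apply/sub_kermxP.
have l_gt0 : (0 < l)%N.
  by case: l {A rkA aA0 v vA0 aker vker} a a_neq0 => // a; rewrite thinmx0 eqxx.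
have /andP[_ ker_a] : (a == kermx A)%MS.
  by rewrite -(mxrank_leqif_eq aker).2 mxrank_ker rkA rank_rV a_neq0 -subn1 subKn.
by apply/sub_rVP; apply: submx_trans vker ker_a.
Qed.

Lemma affine_block_unitmx {K : fieldType} {l : nat} (A : 'M[K]_l) (i0 : 'I_l)
    (a : 'rV_l) :
  A^T = A -> \rank A = l.-1 -> a *m A = 0 -> a 0 i0 = 1 ->
  block_mx A (delta_mx i0 0 : 'M_(l, 1)) (delta_mx 0 i0 : 'M_(1, l)) 0 \in unitmx.
Proof.
move=> Asym rkA aA0 ai0; apply: unitmx_trivial_kernel => u.
rewrite -[u]hsubmxK; set v := lsubmx u; set t := rsubmx u.
rewrite mul_row_block mulmx0 addr0 => /eqP; rewrite row_mx_eq0.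
case/andP => /eqP vAt /eqP v_i0.
(* the d-component is read off by pairing with a, which kills v A *)
have t0 : t = 0.
  have e_a : delta_mx 0 i0 *m a^T = 1%:M :> 'M[K]_1.
    by apply/matrixP => i j; rewrite !ord1 -rowE !mxE ai0.
  have := congr1 (mulmx^~ a^T) vAt.
  by rewrite mulmxDl -!mulmxA -{1}Asym -trmx_mul aA0 trmx0 mulmx0 add0r e_a mulmx1 mul0mx.
rewrite t0 mul0mx addr0 in vAt.
have a_neq0 : a != 0 by apply/eqP => /matrixP/(_ 0 i0); rewrite ai0 mxE; exact/eqP/oner_neq0.
have [c vca] := corank1_kernel rkA aA0 a_neq0 vAt.
have c0 : c = 0.
  have := congr1 (fun M : 'M[K]_1 => M 0 0) v_i0.
  by rewrite -colE vca !mxE ai0 mulr1.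
by rewrite t0 vca c0 scale0r row_mx0.
Qed.

Lemma KM_gram_sym_unit {F : numClosedFieldType} {n : nat} {G : 'M[F]_n} :
  simply_laced_KM_gram G -> G^T = G /\ G \in unitmx.
Proof.
case=> [[A [HA ->]] | [l [A [i0 [e [HA [[a [aA0 [_ ai0]]] ->]]]]]]].
  split; last exact: finite_type_unitmx.
  by case: HA => [[Asym _] _]; rewrite map_trmx Asym.
subst n; rewrite castmx_id.
case: HA => [[Asym _] [_ [_ rkA]]]; split.
  by rewrite tr_block_mx map_trmx Asym !trmx_delta trmx0.
apply: (@affine_block_unitmx _ _ _ _ (map_mx intr a)).
- by rewrite map_trmx Asym.
- rewrite -rkA -(mxrank_map (ratr : rat -> F)) -map_mx_comp.
  by congr (\rank _); apply: eq_map_mx => z /=; rewrite rmorph_int.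
- by rewrite -map_mxM aA0 map_mx0.
- by rewrite mxE ai0.
Qed.

Lemma sum_mul_delta {R : pzSemiRingType} {n : nat} (f : 'I_n -> R) (j : 'I_n) :
  \sum_i f i * (i == j)%:R = f j.
Proof.
rewrite (bigD1 j) //= eqxx mulr1 big1 ?addr0 // => i /negbTE ->.
by rewrite mulr0.
Qed.

Lemma sum_tens_row {F : numClosedFieldType} {n : nat} (X : 'M[F]_n) :
  \sum_mu tens (row mu X) (hb F mu) = X^T.
Proof.
apply/matrixP => i j; rewrite summxE !mxE.
under eq_bigr do rewrite !mxE big_ord1 !mxE eqxx /= eq_sym.
exact: sum_mul_delta.
Qed.

Lemma Omega_invmx {F : numClosedFieldType} {n : nat} (G : 'M[F]_n) :
  Omega G = (invmx G)^T.
Proof. exact: sum_tens_row. Qed.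

Section Coordinates.
Variables (F : numClosedFieldType) (n : nat) (G : 'M[F]_n).
Hypothesis G_unit : G \in unitmx.

Lemma ell_hb (mu b : 'I_n) : ell G mu (hb F b) = (b == mu)%:R.
Proof.
rewrite /ell /Defs.form /zeta /hb -row_mul mulVmx // row1 trmx_delta.
by rewrite mul_delta_mx_cond mulmxnE !mxE !eqxx /= eq_sym.
Qed.

Lemma id_ot_ell (mu : 'I_n) (T : 'M[F]_n) : id_ot (ell G mu) T = (col mu T)^T.
Proof.
rewrite /id_ot [RHS]row_sum_delta; apply: eq_bigr => a _.
rewrite -scaler_suml; congr (_ *: _).
under eq_bigr do rewrite ell_hb.
by rewrite sum_mul_delta !mxE.
Qed.

Lemma ot_id_ell (mu : 'I_n) (T : 'M[F]_n) : ot_id (ell G mu) T = row mu T.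
Proof.
rewrite /ot_id exchange_big [RHS]row_sum_delta; apply: eq_bigr => b _.
rewrite -scaler_suml; congr (_ *: _).
under eq_bigr do rewrite ell_hb.
by rewrite sum_mul_delta !mxE.
Qed.

End Coordinates.

(* Exponents of M0 = q^Q prod_mu x_mu^{X_mu}, in terms of W := G^{-1}:
   X = 1/2 (-W + s^T - s) and Q = -1/4 (W + s + s^T); note that
   W + s + s^T is the exponent of K S12 S21. *)
Definition Xexp {F : fieldType} {n : nat} (W s : 'M[F]_n) : 'M[F]_n :=
  2%:R^-1 *: (- W + s^T - s).
Definition Qexp {F : fieldType} {n : nat} (W s : 'M[F]_n) : 'M[F]_n :=
  - 4%:R^-1 *: (W + s + s^T).

Lemma mul1_inv1 {F : numClosedFieldType} {n : nat} (M : mono1 F n) :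
  mul1 M (inv1 M) = one1 F n /\ mul1 (inv1 M) M = one1 F n.
Proof. by rewrite /mul1 /inv1 /= !subrr !addNr. Qed.

Lemma xprod_scale {F : numClosedFieldType} {n : nat} (c : F)
    (Y : 'I_n -> 'rV[F]_n) :
  xprod (fun mu => c *: Y mu) = Mono1 (c *: x1 (xprod Y)) 0.
Proof. by congr Mono1; apply/matrixP => i j; rewrite !mxE. Qed.

Section Claims.
Variables (F : numClosedFieldType) (n : nat) (G s : 'M[F]_n).
Hypotheses (G_sym : G^T = G) (G_unit : G \in unitmx).

Let W := invmx G.

Lemma W_sym : W^T = W.
Proof. by rewrite trmx_inv G_sym. Qed.

Lemma W_entry_sym (i j : 'I_n) : W j i = W i j.
Proof. by have /matrixP/(_ i j) := W_sym; rewrite mxE. Qed.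

Lemma Omega_W : Omega G = W.
Proof. by rewrite Omega_invmx W_sym. Qed.

Lemma xprod_Yvec : xprod (Yvec G s) = Mono1 (- W + s^T - s) 0.
Proof.
by congr Mono1; apply/matrixP => i j; rewrite !mxE id_ot_ell // ot_id_ell // !mxE.
Qed.

Lemma M0_exponents : M0 G s = Mono1 (Xexp W s) (Qexp W s).
Proof.
rewrite /M0 xprod_scale xprod_Yvec Omega_W /mul1 /= add0r addr0; congr Mono1.
by apply/matrixP => i j; rewrite !mxE W_entry_sym; field.
Qed.

Lemma M0_square :
  sq1 (M0 G s) = mul1 (mul1 (inv1 (kk G)) (qexp1 (- msym s))) (xprod (Yvec G s)).
Proof.
rewrite M0_exponents xprod_Yvec /kk Omega_W /sq1 /mul1 /inv1 /qexp1 /=.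
by congr Mono1; apply/matrixP => i j; rewrite !mxE W_entry_sym; field.
Qed.

(* Delta(M0(x)) = S12^{-1} M0_1(x q^{h_2}) M0_2(x): the cross term of
   Delta(q^Q) is q^{Q + Q^T}, matched by S12^{-1} and the shift. *)
Lemma M0_coproduct :
  Delta (M0 G s) =
  mul2 (mul2 (inv2 (qexp2 s)) (shift (emb1 (M0 G s)))) (emb2 (M0 G s)).
Proof.
rewrite M0_exponents /Delta /mul2 /inv2 /shift /emb1 /emb2 /qexp2 /= sum_tens_row.
congr Mono2; rewrite ?oppr0 ?add0r ?addr0 //.
by apply/matrixP => i j; rewrite !mxE W_entry_sym; field.
Qed.

Lemma M0_shift_square :
  sq2 (shift (emb1 (M0 G s))) =
  mul2 (mul2 (mul2 (sq2 (emb1 (M0 G s))) (qexp2 s)) (inv2 (qexp2 s^T)))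
       (inv2 (qexp2 (Omega G))).
Proof.
rewrite M0_exponents Omega_W /sq2 /mul2 /inv2 /shift /emb1 /qexp2 /= sum_tens_row.
congr Mono2; rewrite ?oppr0 ?add0r ?addr0 //.
by apply/matrixP => i j; rewrite !mxE W_entry_sym; field.
Qed.

Lemma M0_square_trivial :
  mul2 (mul2 (qexp2 (Omega G)) (qexp2 s)) (qexp2 s^T) = one2 F n ->
  sq1 (M0 G s) = xprod (Yvec G s).
Proof.
move=> /(congr1 (@qc F n)); rewrite /= Omega_W => KSS0.
rewrite M0_exponents xprod_Yvec /sq1 /mul1 /Qexp /Xexp KSS0 scaler0 addr0.
by congr Mono1; rewrite -scalerDl -[RHS]scale1r; congr (_ *: _); field.
Qed.

End Claims.

Theorem mainTheorem3 (F : numClosedFieldType) (n : nat) (G : 'M[F]_n)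
    (hG : simply_laced_KM_gram G) (s : 'M[F]_n) :
  let S12 := qexp2 s in
  let S21 := qexp2 s^T in
  let K := qexp2 (Omega G) in
  let M := M0 G s in
  [/\ sq1 M = mul1 (mul1 (inv1 (kk G)) (qexp1 (- msym s))) (xprod (Yvec G s)),
      (exists N, mul1 M N = one1 F n /\ mul1 N M = one1 F n),
      Delta M = mul2 (mul2 (inv2 S12) (shift (emb1 M))) (emb2 M),
      sq2 (shift (emb1 M)) = mul2 (mul2 (mul2 (sq2 (emb1 M)) S12) (inv2 S21)) (inv2 K)
    & (mul2 (mul2 K S12) S21 = one2 F n -> sq1 M = xprod (Yvec G s))].
Proof.
have [G_sym G_unit] := KM_gram_sym_unit hG.
split.
- exact: M0_square.
- by exists (inv1 (M0 G s)); apply: mul1_inv1.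
- exact: M0_coproduct.
- exact: M0_shift_square.
- exact: M0_square_trivial.
Qed.
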